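(* Let $X,Y$ be Banach spaces, let $F:X\rightrightarrows Y$ be a closed convex set-valued mapping, let $A\subset X$ be a closed convex set, let $\bar y\in Y$, put $S:=F^{-1}(\bar y)\cap A$, and let $\bar x\in S$. Suppose there exist a closed convex cone $K\subset X$ and a neighborhood $V$ of $\bar x$ such that $S\cap V=(\bar x+K)\cap V$. Then $$\frac{1}{{\rm subreg}_AF(\bar x,\bar y)}=\sup\{\eta>0:\ DF^{-1}(\bar y,\bar x)(\eta_1B_Y)\cap(T(A,\bar x)+\eta_2B_X)\subset T(S,\bar x)+B_X\ \text{for all }\eta_1,\eta_2\ge0\text{ with }\eta_1+\eta_2<\eta\}.$$
   Context: $B_X,B_Y$ are the closed unit balls; $B(x,\delta)$ is the open ball. $F$ closed convex means ${\rm gph}(F)=\{(x,y):y\in F(x)\}$ is closed and convex in $X\times Y$. For a closed convex set $C$ and $a\in C$, the contingent cone $T(C,a)$ is the set of $v$ for which there exist $v_n\to v$, $t_n\to0^+$ with $a+t_nv_n\in C$ for all $n$. For $(x,y)\in{\rm gph}(F)$, $DF^{-1}(y,x)(v):=\{u\in X:(u,v)\in T({\rm gph}(F),(x,y))\}$ and $DF^{-1}(y,x)(W)=\bigcup_{v\in W}DF^{-1}(y,x)(v)$ for $W\subset Y$. ${\rm subreg}_AF(\bar x,\bar y):=\inf\{\tau>0:\exists\delta>0$ such that $d(x,S)\le\tau(d(\bar y,F(x))+d(x,A))$ for all $x\in B(\bar x,\delta)\}$, with $\inf\emptyset=+\infty$, $\sup\emptyset=0$, $1/(+\infty)=0$,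 $1/0=+\infty$. *)

From HB Require Import structures.
From mathcomp Require Import all_boot all_order all_algebra.
From mathcomp Require Import all_classical all_reals all_analysis.
Set Implicit Arguments. Unset Strict Implicit. Unset Printing Implicit Defensive.
Import Order.TTheory GRing.Theory Num.Theory.
Import numFieldNormedType.Exports.
Local Open Scope classical_set_scope.
Local Open Scope ring_scope.

Definition gph {X Y : Type} (F : X -> set Y) : set (X * Y) :=
  [set p | F p.1 p.2].

Definition is_cone_set {R : realType} {V : lmodType R} (K : set V) : Prop :=
  forall (t : R) k, 0 <= t -> K k -> K (t *: k).

Definition contingent {R : realType} {V : normedModType R} (C : set V) (a : V)
  : set V :=
  [set v | exists (vn : nat -> V) (tn : nat -> R),
     vn @ \oo --> v /\ tn @ \oo --> (0 : R) /\ (forall n, 0 < tn n) /\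
     (forall n, C (a + tn n *: vn n))].

Definition DFinv {R : realType} {X Y : normedModType R} (F : X -> set Y)
  (y : Y) (x : X) (W : set Y) : set X :=
  [set u | exists v, W v /\ contingent (gph F) (x, y) (u, v)].

Definition cball0 {R : realType} {V : normedModType R} (r : R) : set V :=
  [set v | `|v| <= r].

Definition minksum {R : realType} {V : normedModType R} (P Q : set V) : set V :=
  [set w | exists p q, P p /\ Q q /\ w = p + q].

(* distance d(x,C) in \bar R, with inf of the empty set = +oo *)
Definition edist {R : realType} {V : normedModType R} (x : V) (C : set V)
  : \bar R := ereal_inf [set (`|x - c|)%:E | c in C].

(* subreg_A F(xb,yb), an extended real, inf of empty set = +oo *)
Definition subreg {R : realType} {X Y : normedModType R} (F : X -> set Y)
  (A : set X) (xb : X) (yb : Y) : \bar R :=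
  let S := [set x | F x yb /\ A x] in
  ereal_inf [set τ%:E | τ in [set τ : R | 0 < τ /\
     exists δ : R, 0 < δ /\ forall x, `|x - xb| < δ ->
       (edist x S <= τ%:E * (edist yb (F x) + edist x A))%E]].

(* 1/r on \bar R with 1/(+oo) = 0 and 1/0 = +oo *)
Definition einv {R : realType} (r : \bar R) : \bar R :=
  match r with
  | +oo%E => 0%E
  | (x%:E)%E => if x == 0 then +oo%E else (x^-1)%:E
  | -oo%E => 0%E
  end.

(* sup with the convention sup of the empty set = 0 *)
Definition esup0 {R : realType} (E : set (\bar R)) : \bar R :=
  if pselect (E = set0) then 0%E else ereal_sup E.

From Pilot Require Import Defs.
From HB Require Import structures.
From mathcomp Require Import all_boot all_order all_algebra.
From mathcomp Require Import all_classical all_reals all_analysis.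
From mathcomp Require Import ring lra.
Set Implicit Arguments. Unset Strict Implicit. Unset Printing Implicit Defensive.
Import Order.TTheory GRing.Theory Num.Theory.
Import numFieldNormedType.Exports.
Local Open Scope classical_set_scope.
Local Open Scope ring_scope.

(* Near xb the solution set S is the translate xb + K of a closed cone, so
   T(S, xb) = K.  If d(x, S) <= tau (d(yb, F x) + d(x, A)) near xb, then
   approximating (u, v) in T(gph F) and w in T(A) by points of gph F and A
   reached with a common small step t turns this estimate into
   d(u, K) <= tau (|v| + |u - w|), which gives the tangential inclusion for
   every eta <= 1/tau.  Conversely, let the inclusion hold for eta and let
   0 < eta' < eta.  For y in F x and a in A, convexity puts s (x - xb), with
   s = eta'/(|yb - y| + |x - a|), into
   DF^{-1}(yb, xb)(s |y - yb| B) and into T(A, xb) + s |x - a| B; the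
   inclusion splits it as w + b with w in K and |b| <= 1, and xb + w/s is a
   point of S within 1/s of x.  Hence the admissible moduli tau and the
   admissible eta are reciprocal to each other. *)

Section Contingent.
Variables (R : realType) (V : normedModType R).

Lemma contingent_of_segment (C : set V) c v t0 :
  0 < t0 -> (forall t, 0 < t -> t <= t0 -> C (c + t *: v)) -> contingent C c v.
Proof.
move=> t0_gt0 Cseg; exists (fun=> v), (fun n => t0 * n.+1%:R^-1).
split; first exact: cvg_cst.
split.
  by rewrite -(mulr0 t0); apply: cvgM; [exact: cvg_cst | exact: cvg_harmonic].
have tn_gt0 n : 0 < t0 * n.+1%:R^-1 by rewrite mulr_gt0 // invr_gt0 ltr0Sn.
split=> // n; apply: Cseg => //.
by rewrite ler_piMr ?(ltW t0_gt0) // invf_le1 ?ltr0Sn // ler1n.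
Qed.

Lemma contingent_approx (C : set V) c v eps t0 :
  contingent C c v -> 0 < eps -> 0 < t0 ->
  exists t vt, [/\ 0 < t, t < t0, `|v - vt| < eps & C (c + t *: vt)].
Proof.
move=> [vn [tn [vn_v [tn_0 [tn_gt0 Cn]]]]] eps_gt0 t0_gt0.
have [n [vn_near tn_near]] : exists n, `|v - vn n| < eps /\ `|0 - tn n| < t0.
  by apply: (@filter_ex _ \oo); near=> n; split; near: n; exact: cvgr_dist_lt.
exists (tn n), (vn n); split => //.
by rewrite sub0r normrN gtr0_norm in tn_near.
Unshelve. all: by end_near.
Qed.

End Contingent.

Section ConvexContingent.
Variables (R : realType) (M : normedModType R) (C : set (convex_lmodType M)).
Hypothesis C_convex : convex_set C.

Lemma convex_segment (c0 v : M) t1 t :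
  C c0 -> C (c0 + t1 *: v) -> 0 < t -> t <= t1 -> C (c0 + t *: v).
Proof.
move=> Cc0 Cc1 t_gt0 t_le.
have t1_gt0 : 0 < t1 by apply: lt_le_trans t_le.
have l0 : 0 <= t / t1 by rewrite divr_ge0 // ltW.
have l1 : t / t1 <= 1 by rewrite ler_pdivrMr // mul1r.
have := C_convex (Itv01 l0 l1) (mem_set Cc1) (mem_set Cc0); rewrite inE.
suff -> : conv (Itv01 l0 l1) ((c0 + t1 *: v) : convex_lmodType M) c0
  = c0 + t *: v :> M by [].
rewrite /conv /= /unstable.onem scalerDr scalerA mulfVK ?gt_eqF // scalerBl.
by rewrite scale1r addrAC [_ *: c0 + (c0 - _)]addrC subrK.
Qed.

Lemma contingent_convex (c0 c : M) a :
  C c0 -> C c -> 0 < a -> contingent C c0 (a *: (c - c0)).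
Proof.
move=> Cc0 Cc a_gt0; have ainv_gt0 : 0 < a^-1 by rewrite invr_gt0.
apply: (contingent_of_segment ainv_gt0) => t t_gt0 t_le.
apply: (convex_segment Cc0 _ t_gt0 t_le).
by rewrite scalerA mulVf ?gt_eqF // scale1r addrC subrK.
Qed.

Lemma contingent_convex_segment (c0 w : M) eps :
  C c0 -> contingent C c0 w -> 0 < eps ->
  exists t1 w1, [/\ 0 < t1, `|w - w1| < eps &
    forall t, 0 < t -> t <= t1 -> C (c0 + t *: w1)].
Proof.
move=> Cc0 Tw eps_gt0.
have [t1 [w1 [t1_gt0 _ w_near Cw1]]] := contingent_approx Tw eps_gt0 ltr01.
by exists t1, w1; split=> // t; exact: convex_segment.
Qed.

End ConvexContingent.

Section Distance.
Variable R : realType.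
Local Open Scope ereal_scope.

Lemma edist_le_norm (V : normedModType R) (C : set V) x c :
  C c -> Defs.edist x C <= (`|x - c|)%:E.
Proof. by move=> Cc; apply: ereal_inf_lbound; exists c. Qed.

Lemma edist_ge0 (V : normedModType R) (C : set V) x : 0 <= Defs.edist x C.
Proof. by apply: le_ereal_inf_tmp => _ [c _ <-]; rewrite lee_fin. Qed.

Lemma edist_lt (V : normedModType R) (C : set V) x (r : R) :
  Defs.edist x C < r%:E -> exists2 c, C c & (`|x - c| < r)%R.
Proof. by move/ereal_inf_lt => [_ [c Cc <-]]; rewrite lte_fin; exists c. Qed.

Lemma le_edistD (V W : normedModType R) (C : set V) (D : set W) p q e (t : R) :
  (0 < t)%R ->
  (forall c d, C c -> D d -> e <= (t * (`|p - c| + `|q - d|))%:E) ->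
  e <= t%:E * (Defs.edist p C + Defs.edist q D).
Proof.
move=> t_gt0 le_e.
have := edist_ge0 C p; have := @edist_lt _ C p.
have := edist_ge0 D q; have := @edist_lt _ D q.
case: (Defs.edist q D) => [r2||] // near_d _;
  case: (Defs.edist p C) => [r1||] // near_c _;
  try by rewrite ?addye ?addey // mulry gtr0_sg // mul1e leey.
apply/lee_addgt0Pr => eps eps_gt0.
have eps'_gt0 : (0 < eps / (2 * t))%R by rewrite divr_gt0 // mulr_gt0.
have [c Cc pc] : exists2 c, C c & (`|p - c| < r1 + eps / (2 * t))%R.
  by apply: near_c; rewrite lte_fin ltrDl.
have [d Dd qd] : exists2 d, D d & (`|q - d| < r2 + eps / (2 * t))%R.
  by apply: near_d; rewrite lte_fin ltrDl.
apply: le_trans (le_e c d Cc Dd) _.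
have -> : t%:E * (r1%:E + r2%:E) + eps%:E = (t * (r1 + r2) + eps)%:E by [].
rewrite lee_fin.
have -> : (t * (r1 + r2) + eps =
           t * (r1 + eps / (2 * t) + (r2 + eps / (2 * t))))%R.
  by field; rewrite gt_eqF.
by rewrite ler_pM2l // lerD // ltW.
Qed.

End Distance.

Lemma sup_itv_sandwich (R : realType) (E : set R) (m : R) : 0 < m ->
  (forall η, 0 < η -> η < m -> E η) -> (forall η, E η -> η <= m) ->
  sup E = m.
Proof.
move=> m_gt0 itv_E E_ub.
have E_half : E (m / 2).
  by apply: itv_E; rewrite ?divr_gt0 // ltr_pdivrMr // ltr_pMr // ltr1n.
apply/le_anti/andP; split; first by apply: ge_sup E_ub; exists (m / 2).
apply/ler_addgt0Pr => e e_gt0; rewrite -lerBlDr.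
have Eη : E (Num.max (m - e) (m / 2)).
  apply: itv_E; first by rewrite lt_max divr_gt0 ?orbT.
  by rewrite gt_max gtrBl e_gt0 ltr_pdivrMr // ltr_pMr // ltr1n.
by apply: le_trans (ub_le_sup (ex_intro _ m E_ub) Eη); rewrite le_max lexx.
Qed.

Lemma esup0_nonempty (R : realType) (S : set (\bar R)) :
  S !=set0 -> esup0 S = ereal_sup S.
Proof.
by case=> x Sx; rewrite /esup0; case: pselect => // S0; rewrite S0 in Sx.
Qed.

Lemma esup0_einv (R : realType) (E : set R) (s : \bar R) :
  (0 <= s)%E -> (forall η, 0 < η -> (s < (η^-1)%:E)%E -> E η) ->
  (forall η, E η -> (s <= (η^-1)%:E)%E) ->
  esup0 [set η%:E | η in E] = einv s.
Proof.
move=> s_ge0 E_of_lt E_le.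
case: s => [r||] in s_ge0 E_of_lt E_le *; last by [].
- have [r0 | r_neq0] := eqVneq r 0.
    have E_pos η : 0 < η -> E η.
      by move=> η_gt0; apply: E_of_lt; rewrite // r0 lte_fin invr_gt0.
    rewrite r0 /einv eqxx esup0_nonempty; last first.
      by exists 1%:E, 1 => //; exact: E_pos.
    apply: hasNub_ereal_sup; last by exists 1; exact: E_pos.
    move=> [M ubM].
    have := ubM (`|M| + 1) (E_pos _ (ltr_wpDl (normr_ge0 M) ltr01)).
    by apply/negP; rewrite -ltNge (le_lt_trans (ler_norm M)) // ltrDl.
  have r_gt0 : 0 < r by rewrite lt_neqAle eq_sym r_neq0 -lee_fin.
  have E_itv η : 0 < η -> η < r^-1 -> E η.
    move=> η_gt0 η_lt; apply: E_of_lt => //.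
    by rewrite lte_fin -[r]invrK ltf_pV2 // posrE invr_gt0.
  have E_ub η : E η -> η <= r^-1.
    move=> /E_le; rewrite lee_fin => r_le.
    have η_gt0 : 0 < η by rewrite -invr_gt0; exact: lt_le_trans r_le.
    by rewrite -[η]invrK lef_pV2 ?posrE ?invr_gt0.
  have E_half : E (r^-1 / 2).
    apply: E_itv; first by rewrite divr_gt0 ?invr_gt0.
    by rewrite ltr_pdivrMr // ltr_pMr ?invr_gt0 // ltr1n.
  rewrite /einv (negbTE r_neq0) esup0_nonempty; last first.
    by exists (r^-1 / 2)%:E, (r^-1 / 2).
  rewrite ereal_sup_EFin; [|by exists r^-1 | by exists (r^-1 / 2)].
  by rewrite (sup_itv_sandwich _ E_itv E_ub) // invr_gt0.
- have -> : [set η%:E | η in E] = set0.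
    by rewrite -subset0 => ? [η Eη _]; move: (E_le η Eη); rewrite leye_eq.
  by rewrite /esup0; case: pselect.
Qed.

Lemma locally_conic_of_nbhs (R : realType) (X : normedModType R)
    (S K U : set X) xb :
  nbhs xb U -> S `&` U = [set xb + k | k in K] `&` U ->
  exists2 d0, 0 < d0 & forall z, `|z - xb| < d0 -> S z <-> K (z - xb).
Proof.
move=> /nbhs_ballP [d0 d0_gt0 ballU] SKU; exists d0 => // z z_near.
have Uz : U z by apply: ballU; rewrite -ball_normE /ball_ /= distrC.
split => [Sz | Kz].
- have : ([set xb + k | k in K] `&` U) z by rewrite -SKU.
  by move=> [[k Kk <-] _]; rewrite addrC addKr.
- have : (S `&` U) z.
    by rewrite SKU; split => //; exists (z - xb); rewrite // addrC subrK.
  by case.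
Qed.

Section LocallyConic.
Variables (R : realType) (X : normedModType R) (S K : set X) (xb : X) (d0 : R).
Hypotheses (d0_gt0 : 0 < d0) (K_cone : is_cone_set K) (K_closed : closed K).
Hypothesis S_conic : forall z, `|z - xb| < d0 -> S z <-> K (z - xb).

Lemma contingent_locally_conic : contingent S xb = K.
Proof.
apply/seteqP; split => [v [vn [tn [vn_v [tn_0 [tn_gt0 Sn]]]]] | k Kk].
  apply: (closed_cvg _ K_closed _ _ vn_v); near=> n.
  have v1_gt0 : 0 < `|v| + 1 by rewrite ltr_wpDl.
  have tvn_small : `|tn n *: vn n| < d0.
    rewrite normrZ gtr0_norm //; apply: (@le_lt_trans _ _ (tn n * (`|v| + 1))).
      rewrite ler_pM2l // -lerBlDl; apply: le_trans (lerB_dist _ _) _.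
      by rewrite distrC ltW //; near: n; exact: cvgr_dist_lt.
    rewrite -ltr_pdivlMr //; have : `|0 - tn n| < d0 / (`|v| + 1).
      by near: n; apply: cvgr_dist_lt; rewrite // divr_gt0.
    by rewrite sub0r normrN gtr0_norm.
  have Ktv : K (tn n *: vn n).
    have near_xb : `|xb + tn n *: vn n - xb| < d0 by rewrite addrC addKr.
    by have := (S_conic near_xb).1 (Sn n); rewrite addrC addKr.
  have tinv_ge0 : 0 <= (tn n)^-1 by rewrite invr_ge0 ltW.
  by have := K_cone tinv_ge0 Ktv; rewrite scalerA mulVf ?gt_eqF // scale1r.
have k1_gt0 : 0 < `|k| + 1 by rewrite ltr_wpDl.
apply: (contingent_of_segment (t0 := d0 / (`|k| + 1))).
  by rewrite divr_gt0.
move=> t t_gt0 t_le; apply/S_conic; rewrite addrC addKr.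
  rewrite normrZ gtr0_norm //.
  apply: le_lt_trans (ler_wpM2r (normr_ge0 k) t_le) _.
  by rewrite mulrAC ltr_pdivrMr // ltr_pM2l // ltrDl.
exact: K_cone (ltW t_gt0) Kk.
Unshelve. all: by end_near.
Qed.

Lemma cone_approx_of_edist u t rho :
  0 < t -> t * (`|u| + rho) <= d0 ->
  (Defs.edist (xb + t *: u)%R S < (t * rho)%:E)%E ->
  exists2 z, K z & `|u - z| < rho.
Proof.
move=> t_gt0 t_le /edist_lt [q Sq q_near].
have q_xb : `|q - xb| < d0.
  apply: le_lt_trans (ler_distD (xb + t *: u) _ _) _.
  have -> : xb + t *: u - xb = t *: u by rewrite addrC addKr.
  rewrite distrC normrZ gtr0_norm //.
  by apply: lt_le_trans t_le; rewrite mulrDr; lra.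
exists (t^-1 *: (q - xb)).
  by apply: K_cone; [rewrite invr_ge0 ltW | exact: (S_conic q_xb).1].
have x_q : xb + t *: u - q = t *: (u - t^-1 *: (q - xb)).
  by rewrite scalerBr scalerA mulfV ?gt_eqF // scale1r opprB addrCA addrA.
by rewrite -(ltr_pM2l t_gt0); move: q_near; rewrite x_q normrZ gtr0_norm.
Qed.

Lemma edist_le_of_cone_split x s w b :
  0 < s -> s *: (x - xb) = w + b -> K w -> `|b| <= 1 ->
  s^-1 < `|x - xb| -> `|x - xb| < d0 / 2 -> (Defs.edist x S <= (s^-1)%:E)%E.
Proof.
move=> s_gt0 split_x Kw b_le1 x_far x_near.
have sinv_gt0 : 0 < s^-1 by rewrite invr_gt0.
have x_xb : x - xb = s^-1 *: w + s^-1 *: b.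
  by rewrite -scalerDr -split_x scalerA mulVf ?gt_eqF // scale1r.
have sb_le : `|s^-1 *: b| <= s^-1.
  by rewrite normrZ gtr0_norm // ler_piMr // ltW.
have Sp : S (xb + s^-1 *: w).
  apply/S_conic; rewrite addrC addKr; last exact: K_cone (ltW sinv_gt0) Kw.
  have -> : s^-1 *: w = (x - xb) - s^-1 *: b by rewrite x_xb addrK.
  by apply: le_lt_trans (ler_normB _ _) _; lra.
apply: le_trans (edist_le_norm _ Sp) _.
by rewrite opprD addrA x_xb addrAC subrr add0r lee_fin.
Qed.

End LocallyConic.

Definition tangent_inclusion (R : realType) (X Y : normedModType R)
    (F : X -> set Y) (A : set X) (yb : Y) (xb : X) (η : R) : Prop :=
  forall η1 η2 : R, 0 <= η1 -> 0 <= η2 -> η1 + η2 < η ->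
    DFinv F yb xb (cball0 η1) `&` minksum (contingent A xb) (cball0 η2)
    `<=` minksum (contingent [set x | F x yb /\ A x] xb) (cball0 1).

Definition subreg_bound (R : realType) (X Y : normedModType R)
    (F : X -> set Y) (A : set X) (xb : X) (yb : Y) (τ δ : R) : Prop :=
  forall x, `|x - xb| < δ ->
    (Defs.edist x [set x | F x yb /\ A x] <=
      τ%:E * (Defs.edist yb (F x) + Defs.edist x A))%E.

Section Subregularity.
Variables (R : realType) (X Y : normedModType R) (F : X -> set Y) (A : set X).
Variables (yb : Y) (xb : X) (K : set X) (d0 : R).
Local Notation S := [set x | F x yb /\ A x].
Hypotheses (d0_gt0 : 0 < d0) (K_cone : is_cone_set K) (K_closed : closed K).
Hypothesis S_conic : forall z, `|z - xb| < d0 -> S z <-> K (z - xb).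
Hypotheses (F_convex : convex_set (gph F)) (A_convex : convex_set A).
Hypothesis xbS : F xb yb /\ A xb.

Lemma subreg_bound_step τ δ t un vn w1 :
  0 < τ -> subreg_bound F A xb yb τ δ -> 0 < t -> t * `|un| < δ ->
  F (xb + t *: un) (yb + t *: vn) -> A (xb + t *: w1) ->
  (Defs.edist (xb + t *: un)%R S <= (τ * t * (`|vn| + `|un - w1|))%:E)%E.
Proof.
move=> τ_gt0 bound t_gt0 un_near Fn Aw1.
apply: le_trans (bound _ _) _; first by rewrite addrC addKr normrZ gtr0_norm.
rewrite -mulrA EFinM lee_pmul2l ?lte_fin // mulrDr EFinD.
apply: leeD.
  apply: le_trans (edist_le_norm _ Fn) _.
  by rewrite lee_fin opprD addNKr normrN normrZ gtr0_norm.
apply: le_trans (edist_le_norm _ Aw1) _.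
by rewrite lee_fin opprD addrACA subrr add0r -scalerBr normrZ gtr0_norm.
Qed.

Lemma cone_approx_of_subreg_bound τ δ u v w e :
  0 < τ -> 0 < δ -> subreg_bound F A xb yb τ δ ->
  contingent (gph F) (xb, yb) (u, v) -> contingent A xb w -> 0 < e ->
  exists2 z, K z & `|u - z| < τ * (`|v| + `|u - w|) + e.
Proof.
move=> τ_gt0 δ_gt0 bound Tuv Tw e_gt0.
(* the total error eps + rho - tau (|v| + |u - w|) is (3 tau + 2) eps = e *)
set eps := e / (3 * τ + 2).
have eps_gt0 : 0 < eps by rewrite divr_gt0 // addr_gt0 // mulr_gt0.
set rho := τ * (`|v| + `|u - w| + 3 * eps) + eps.
have rho_gt0 : 0 < rho.
  by rewrite /rho; have := normr_ge0 v; have := normr_ge0 (u - w); nra.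
have [t1 [w1 [t1_gt0 w_w1 Aseg]]] :=
  contingent_convex_segment A_convex xbS.2 Tw eps_gt0.
have u_gt0 : 0 < `|u| + eps by rewrite ltr_wpDl.
set t0 := Num.min t1 (Num.min (δ / (`|u| + eps)) (d0 / (`|u| + eps + rho))).
have t0_gt0 : 0 < t0 by rewrite !lt_min t1_gt0 !divr_gt0 // addr_gt0.
have [t [[un vn] [t_gt0 t_lt uv_near Gn]]] :=
  contingent_approx Tuv eps_gt0 t0_gt0.
move: uv_near t_lt; rewrite prod_normE /= gt_max !lt_min.
move=> /andP[u_un v_vn] /and3P[t_t1 t_δ t_d0].
have un_le : `|un| <= `|u| + eps by have := lerB_dist un u; rewrite distrC; lra.
have vn_le : `|vn| <= `|v| + eps by have := lerB_dist vn v; rewrite distrC; lra.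
have un_w1 : `|un - w1| <= `|u - w| + 2 * eps.
  have := ler_distD u un w1; have := ler_distD w u w1.
  by rewrite [`|un - u|]distrC; lra.
have dS : (Defs.edist (xb + t *: un)%R S < (t * rho)%:E)%E.
  have Fn : F (xb + t *: un) (yb + t *: vn) := Gn.
  have Aw1 := Aseg t t_gt0 (ltW t_t1).
  apply: le_lt_trans (subreg_bound_step τ_gt0 bound t_gt0 _ Fn Aw1) _.
    by apply: le_lt_trans (ler_wpM2l (ltW t_gt0) un_le) _; rewrite -ltr_pdivlMr.
  rewrite lte_fin -mulrA mulrCA ltr_pM2l // /rho.
  apply: (@le_lt_trans _ _ (τ * (`|v| + `|u - w| + 3 * eps))); last by rewrite ltrDl.
  by rewrite ler_pM2l //; lra.
have un_rho : t * (`|un| + rho) <= d0.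
  have : t * (`|u| + eps + rho) < d0 by rewrite -ltr_pdivlMr // addr_gt0.
  by move/ltW; apply: le_trans; rewrite ler_pM2l // lerD2r.
have [z Kz un_z] := cone_approx_of_edist K_cone S_conic t_gt0 un_rho dS.
exists z => //.
have e_eq : e = eps * (3 * τ + 2).
  by rewrite divfK // gt_eqF // addr_gt0 // mulr_gt0.
by have := ler_distD un u z; rewrite e_eq /rho in un_z *; lra.
Qed.

Lemma tangent_inclusion_of_subreg_bound τ δ η :
  0 < τ -> 0 < δ -> subreg_bound F A xb yb τ δ -> η * τ <= 1 ->
  tangent_inclusion F A yb xb η.
Proof.
move=> τ_gt0 δ_gt0 bound ητ η1 η2 η1_ge0 η2_ge0 η12 u.
move=> [[v [v_le Tuv]] [w [b [Tw [b_le u_wb]]]]]; subst u.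
rewrite /cball0 /= in v_le b_le.
rewrite (contingent_locally_conic d0_gt0 K_cone K_closed S_conic).
have gap : 0 < 1 - τ * (η1 + η2).
  by rewrite subr_gt0; apply: lt_le_trans ητ; rewrite mulrC ltr_pM2r.
have [z Kz uz] := cone_approx_of_subreg_bound τ_gt0 δ_gt0 bound Tuv Tw gap.
exists z, (w + b - z); do 2 split => //; last by rewrite [RHS]addrC subrK.
have wbw : w + b - w = b by rewrite addrC addKr.
rewrite wbw in uz; rewrite /cball0 /=.
have : τ * (`|v| + `|b|) <= τ * (η1 + η2) by rewrite ler_pM2l // lerD.
lra.
Qed.

Lemma subreg_bound_of_tangent_inclusion η η' :
  tangent_inclusion F A yb xb η -> 0 < η' -> η' < η ->
  subreg_bound F A xb yb η'^-1 (d0 / 2).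
Proof.
move=> incl η'_gt0 η'_lt x x_near.
apply: le_edistD => [|y a Fy Aa]; first by rewrite invr_gt0.
set r := `|yb - y| + `|x - a|.
have [x_close | x_far] := leP `|x - xb| (η'^-1 * r).
  by apply: le_trans (edist_le_norm _ xbS) _; rewrite lee_fin.
have [r_gt0 | r_le0] := ltP 0 r; last first.
  have : `|yb - y| <= 0 /\ `|x - a| <= 0.
    have := normr_ge0 (yb - y); have := normr_ge0 (x - a).
    by rewrite /r in r_le0; lra.
  rewrite !normr_le0 !subr_eq0 => -[/eqP yb_y /eqP x_a].
  have Sx : S x by split; [rewrite yb_y | rewrite x_a].
  apply: le_trans (edist_le_norm _ Sx) _.
  rewrite subrr normr0 lee_fin; apply: mulr_ge0; first by rewrite invr_ge0 ltW.
  by rewrite addr_ge0.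
set s := η' / r.
have s_gt0 : 0 < s by rewrite divr_gt0.
have Dx : DFinv F yb xb (cball0 (s * `|y - yb|)) (s *: (x - xb)).
  exists (s *: (y - yb)); split; first by rewrite /cball0 /= normrZ gtr0_norm.
  by have := @contingent_convex _ _ _ F_convex (xb, yb) (x, y) s xbS.1 Fy s_gt0.
have Mx : minksum (contingent A xb) (cball0 (s * `|x - a|)) (s *: (x - xb)).
  exists (s *: (a - xb)), (s *: (x - a)); split.
    exact: (contingent_convex A_convex xbS.2 Aa s_gt0).
  split; first by rewrite /cball0 /= normrZ gtr0_norm.
  by rewrite -scalerDr [a - xb + _]addrC addrA subrK.
have s_sum : s * `|y - yb| + s * `|x - a| < η.
  by rewrite -mulrDr distrC /s mulfVK // gt_eqF.
have [w [b [Tw [b_le split_x]]]] :=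
  incl _ _ (mulr_ge0 (ltW s_gt0) (normr_ge0 _))
    (mulr_ge0 (ltW s_gt0) (normr_ge0 _)) s_sum _ (conj Dx Mx).
rewrite (contingent_locally_conic d0_gt0 K_cone K_closed S_conic) in Tw.
have sinv : η'^-1 * r = s^-1 by rewrite /s invf_div mulrC.
rewrite sinv in x_far *.
exact: (edist_le_of_cone_split K_cone S_conic s_gt0 split_x Tw b_le x_far
  x_near).
Qed.

Lemma tangent_inclusion_of_subreg_lt η :
  0 < η -> (subreg F A xb yb < (η^-1)%:E)%E -> tangent_inclusion F A yb xb η.
Proof.
move=> η_gt0 /ereal_inf_lt [_ [τ [τ_gt0 [δ [δ_gt0 bound]]] <-]].
rewrite lte_fin => τ_lt.
apply: (tangent_inclusion_of_subreg_bound τ_gt0 δ_gt0 bound).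
by rewrite ltW // -ltr_pdivlMl // mulr1.
Qed.

Lemma subreg_le_inv η :
  0 < η -> tangent_inclusion F A yb xb η ->
  (subreg F A xb yb <= (η^-1)%:E)%E.
Proof.
move=> η_gt0 incl; apply/lee_addgt0Pr => e e_gt0.
have ηe_gt0 : 0 < η^-1 + e by rewrite addr_gt0 // invr_gt0.
apply: ereal_inf_lbound; exists (η^-1 + e) => //; split => //.
exists (d0 / 2); split; first by rewrite divr_gt0.
rewrite -[η^-1 + e]invrK; apply: subreg_bound_of_tangent_inclusion incl _ _.
  by rewrite invr_gt0.
by rewrite invf_plt ?posrE // ltrDl.
Qed.

End Subregularity.

Theorem theorem3p2 (R : realType) (X Y : completeNormedModType R)
  (F : X -> set Y) (A : set X) (yb : Y) (xb : X)
  (F_closed : closed (gph F)) (F_convex : convex_set (gph F))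
  (A_closed : closed A) (A_convex : convex_set A)
  (xbS : F xb yb /\ A xb)
  (K : set X) (V : set X)
  (K_closed : closed K) (K_convex : convex_set K) (K_cone : is_cone_set K)
  (V_nbhs : nbhs xb V)
  (HSK : [set x | F x yb /\ A x] `&` V = [set xb + k | k in K] `&` V) :
  einv (subreg F A xb yb) =
  esup0 [set η%:E | η in [set η : R | 0 < η /\
    forall η1 η2 : R, 0 <= η1 -> 0 <= η2 -> η1 + η2 < η ->
      DFinv F yb xb (cball0 η1) `&` minksum (contingent A xb) (cball0 η2)
      `<=` minksum (contingent [set x | F x yb /\ A x] xb) (cball0 1)]].
Proof.
have [d0 d0_gt0 S_conic] := locally_conic_of_nbhs V_nbhs HSK.
symmetry; apply: esup0_einv.
- by apply: le_ereal_inf_tmp => _ [τ [τ_gt0 _] <-]; rewrite lee_fin ltW.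
- move=> η η_gt0 subreg_lt; split => //.
  exact: (tangent_inclusion_of_subreg_lt d0_gt0 K_cone K_closed S_conic
    A_convex xbS η_gt0).
- move=> η [η_gt0 incl].
  exact: (subreg_le_inv d0_gt0 K_cone K_closed S_conic F_convex A_convex xbS
    η_gt0).
Qed.
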